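(* Let $(X,\|\cdot\|_X)$ be a Banach space and $p\in[1,\infty)$; fix $m,n\in\mathbb N$. Then for every $f:\mathbb Z_{8m}^n\to X$ and $j\in\{1,\ldots,n\}$, $$\sum_{x\in\mathbb Z_{8m}^n}\|f(x)-T_jf(x)\|_X^p\le\frac{2^p}{2^n}\sum_{\varepsilon\in\{-1,1\}^n}\sum_{x\in\mathbb Z_{8m}^n}\|f(x+\varepsilon)-f(x)\|_X^p.$$ Moreover, for every $x\in\mathbb Z_{8m}^n$, $$\sum_{\varepsilon\in\{-1,1\}^n}\Big\|\sum_{j=1}^n\varepsilon_j\big[T_jf(x+2e_j)-T_jf(x-2e_j)\big]\Big\|_X^p\le(2K_p(X))^p\sum_{\varepsilon\in\{-1,1\}^n}\|f(x+2\varepsilon)-f(x)\|_X^p\le(4K_p(X))^p\sum_{\varepsilon\in\{-1,1\}^n}\|f(x+\varepsilon)-f(x)\|_X^p.$$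
   Context: $\mathbb Z_{8m}^n=(\mathbb Z/8m\mathbb Z)^n$, integer vectors added modulo $8m$; $e_j$ standard basis; $\varepsilon_T=\sum_{i\in T}\varepsilon_ie_i$. $T_jf(x)=\frac1{2^n}\sum_{\varepsilon\in\{-1,1\}^n}f\big(x+2\varepsilon_{\{1,\ldots,n\}\setminus\{j\}}\big)$. $K_p(X)\in[1,\infty]$ is the $K$-convexity constant: the least $K$ such that for all $N$ and $h:\{-1,1\}^N\to X$, $\sum_\varepsilon\|\mathrm{Rad}(h)(\varepsilon)\|^p\le K^p\sum_\varepsilon\|h(\varepsilon)\|^p$, where $\mathrm{Rad}(h)(\varepsilon)=\sum_{j=1}^N\big(2^{-N}\sum_\delta h(\delta)\delta_j\big)\varepsilon_j$. *)

From HB Require Import structures.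
From mathcomp Require Import all_boot all_order all_algebra.
From Stdlib Require Import Reals.

Set Implicit Arguments. Unset Strict Implicit. Unset Printing Implicit Defensive.

Record BanachSpace := {
  bs_car :> Type;
  bs_zero : bs_car;
  bs_add : bs_car -> bs_car -> bs_car;
  bs_opp : bs_car -> bs_car;
  bs_scal : R -> bs_car -> bs_car;
  bs_norm : bs_car -> R;
  bs_addA : forall x y z, bs_add x (bs_add y z) = bs_add (bs_add x y) z;
  bs_addC : forall x y, bs_add x y = bs_add y x;
  bs_add0 : forall x, bs_add bs_zero x = x;
  bs_addN : forall x, bs_add (bs_opp x) x = bs_zero;
  bs_scal1 : forall x, bs_scal 1%R x = x;
  bs_scalA : forall a b x, bs_scal a (bs_scal b x) = bs_scal (Rmult a b) x;
  bs_scalDr : forall a x y, bs_scal a (bs_add x y) = bs_add (bs_scal a x) (bs_scal a y);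
  bs_scalDl : forall a b x, bs_scal (Rplus a b) x = bs_add (bs_scal a x) (bs_scal b x);
  bs_norm_eq0 : forall x, bs_norm x = 0%R -> x = bs_zero;
  bs_normZ : forall a x, bs_norm (bs_scal a x) = Rmult (Rabs a) (bs_norm x);
  bs_normD : forall x y, Rle (bs_norm (bs_add x y)) (Rplus (bs_norm x) (bs_norm y));
  bs_complete : forall u : nat -> bs_car,
    (forall eps, Rlt 0 eps -> exists N, forall k l, (N <= k)%nat -> (N <= l)%nat ->
        Rlt (bs_norm (bs_add (u k) (bs_opp (u l)))) eps) ->
    exists L, forall eps, Rlt 0 eps -> exists N, forall k, (N <= k)%nat ->
        Rlt (bs_norm (bs_add (u k) (bs_opp L))) eps
}.

Arguments bs_zero {_}. Arguments bs_add {_}. Arguments bs_opp {_}.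
Arguments bs_scal {_}. Arguments bs_norm {_}.

Definition bs_sub (X : BanachSpace) (x y : X) : X := bs_add x (bs_opp y).

Definition rpow (a p : R) : R :=
  if Rle_dec a 0 then 0%R else Rpower a p.

Definition rsum (T : finType) (F : T -> R) : R := \big[Rplus/0%R]_(t : T) F t.
Definition xsum (X : BanachSpace) (T : finType) (F : T -> X) : X :=
  \big[@bs_add X/bs_zero]_(t : T) F t.

(* {-1,1}^N, encoded as boolean functions: true <-> +1, false <-> -1 *)
Definition signs (N : nat) := {ffun 'I_N -> bool}.
Definition sgnR (b : bool) : R := if b then 1%R else (-1)%R.

Section ZVec.
Local Open Scope ring_scope.
Definition pt (m n : nat) := 'rV['Z_(8 * m)]_n.

Definition ptadd (m n : nat) (x y : pt m n) : pt m n := GRing.add x y.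
Definition ptsub (m n : nat) (x y : pt m n) : pt m n := GRing.add x (GRing.opp y).

Definition epsv (m n : nat) (c : nat) (e : signs n) : pt m n :=
  \row_(i < n) (if e i then (c%:R)
                else GRing.opp ((c%:R))).

Definition epsv_but (m n : nat) (j : 'I_n) (e : signs n) : pt m n :=
  \row_(i < n) (if i == j then 0
                else if e i then (2%:R)
                else GRing.opp ((2%:R))).

Definition two_e (m n : nat) (j : 'I_n) : pt m n :=
  \row_(i < n) (if i == j then (2%:R) else 0).

End ZVec.

Definition Tj (X : BanachSpace) (m n : nat) (j : 'I_n) (f : pt m n -> X)
    (x : pt m n) : X :=
  bs_scal (Rinv (pow 2 n)) (xsum (fun e : signs n => f (ptadd x (epsv_but m j e)))).

Definition Rad (X : BanachSpace) (N : nat) (h : signs N -> X) (e : signs N) : X :=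
  xsum (fun j : 'I_N =>
    bs_scal (sgnR (e j))
      (bs_scal (Rinv (pow 2 N)) (xsum (fun d : signs N => bs_scal (sgnR (d j)) (h d))))).

(* K is an admissible K-convexity constant for X (exponent p); K_p(X) is the
   least such K (or infinity if none exists). *)
Definition Kconv_const (X : BanachSpace) (p K : R) : Prop :=
  forall (N : nat) (h : signs N -> X),
    Rle (rsum (fun e : signs N => rpow (bs_norm (Rad h e)) p))
        (Rmult (rpow K p) (rsum (fun e : signs N => rpow (bs_norm (h e)) p))).

(* Both parts are elementary once the quantities are written as averages over
   sign vectors.  For the first inequality, f x - T_j f x is the average of
   f x - f (x + 2 eps_{[n]\{j}}), so Jensen's inequality reduces it to the
   p-th powers of these differences; and 2 eps_{[n]\{j}} is the sum of the two
   sign vectors eps agreeing with it off j (with eps_j = +1 and eps_j = -1),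
   so the triangle inequality through x + eps and translation invariance of
   the sum over Z_{8m}^n bound each term by 2^p/2 times two unit-step terms.
   For the second chain, T_j f (x + 2e_j) - T_j f (x - 2e_j) is exactly the
   j-th Rademacher coefficient of h eps := 2 (f (x + 2 eps) - f x), so the sum
   over j is Rad h and K-convexity applies; the last step is again the
   triangle inequality, now through x + eps. *)
From HB Require Import structures.
From mathcomp Require Import all_boot all_order all_algebra.
From Stdlib Require Import Reals.
From mathcomp Require Import boolp classical_sets interval_inference reals exp convex hoelder Rstruct Rstruct_topology.
From mathcomp Require Import ring lra.

Set Implicit Arguments. Unset Strict Implicit. Unset Printing Implicit Defensive.
Import Order.TTheory GRing.Theory Num.Theory.
Local Open Scope ring_scope.

Lemma rpowE (a p : R) : 0 <= a -> 0 < p -> rpow a p = powR a p.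
Proof.
move=> a0 p0; rewrite /rpow; case: Rle_dec => [a_le0|a_gt0] /=.
  have -> : a = 0 by apply/eqP; rewrite eq_le a0 andbT; apply/RleP.
  by rewrite powR0 // gt_eqF.
have a_neq0 : a != 0 by apply: contra_notN a_gt0 => /eqP ->; apply: Rle_refl.
by rewrite /powR (negbTE a_neq0) /Rpower RexpE RlnE.
Qed.

Lemma IZR2 : IZR 2 = 2%:R. Proof. by rewrite IZRposE INRE. Qed.
Lemma IZR4 : IZR 4 = 4%:R. Proof. by rewrite IZRposE INRE. Qed.

Lemma powR_le (p a b : R) : 0 <= p -> 0 <= a -> a <= b -> powR a p <= powR b p.
Proof. by move=> p0 a0 ab; apply: ge0_ler_powR; rewrite ?nnegrE // (le_trans a0). Qed.

Section PowerMean.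
Variable p : R.
Hypothesis p_ge1 : 1 <= p.

Lemma powR_conv (t a b : R) : 0 <= t <= 1 -> 0 <= a -> 0 <= b ->
  powR (t * a + (1 - t) * b) p <= t * powR a p + (1 - t) * powR b p.
Proof.
move=> /andP[t0 t1] a0 b0.
have := convex_powR p_ge1 (Itv01 t0 t1) (x := a) (y := b).
by rewrite !inE /= !in_itv /= !andbT !convRE; apply.
Qed.

Lemma powR_add_le (a b : R) : 0 <= a -> 0 <= b ->
  powR (a + b) p <= powR 2 p / 2 * (powR a p + powR b p).
Proof.
move=> a0 b0.
have half : 0 <= (2^-1 : R) <= 1 by apply/andP; split; lra.
have := powR_conv half a0 b0.
have -> : 1 - 2^-1 = 2^-1 :> R by field.
have -> : 2^-1 * a + 2^-1 * b = (a + b) * 2^-1 by ring.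
rewrite powRM ?addr_ge0 ?invr_ge0 // => /(ler_wpM2l (powR_ge0 2 p)).
have two_half : powR 2 p * powR 2^-1 p = 1 by rewrite -powRM ?invr_ge0 // mulfV // powR1.
by rewrite mulrCA two_half mulr1 => /le_trans; apply; rewrite -mulrDr mulrA.
Qed.

(* Induction on the list: the head gets weight 1/(k+1) in a two-point
   convexity step against the mean of the tail. *)
Lemma powR_mean_seq (s : seq R) : all (>= 0) s -> s != [::] ->
  powR ((size s)%:R^-1 * \sum_(x <- s) x) p <= (size s)%:R^-1 * \sum_(x <- s) powR x p.
Proof.
elim: s => [//|a s IH] /andP[a0 s0] _.
case: s IH s0 => [_ _|b s IH s0].
  by rewrite /= !big_cons !big_nil !addr0 invr1 !mul1r.
have {IH} := IH s0 isT; set k := size (b :: s) => IH.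
have k_gt0 : 0 < (k%:R : R) by rewrite ltr0n.
have sum_ge0 : 0 <= \sum_(x <- b :: s) x.
  by rewrite big_seq sumr_ge0 // => x; apply: (allP (s0 : all (>= 0) (b :: s))).
have -> : size [:: a, b & s] = k.+1 by [].
rewrite big_cons [in leRHS]big_cons; set t := ((k.+1)%:R : R)^-1.
have t01 : 0 <= t <= 1 by rewrite invr_ge0 ler0n invf_le1 ?ler1n ?ltr0n.
have split_head (u v : R) : t * (u + v) = t * u + (1 - t) * (k%:R^-1 * v).
  by rewrite /t -addn1 natrD; field; rewrite ?gt_eqF //; lra.
have mean_ge0 : 0 <= k%:R^-1 * \sum_(x <- b :: s) x by rewrite mulr_ge0 // invr_ge0 ltW.
rewrite !split_head; apply: le_trans (powR_conv t01 a0 mean_ge0) _.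
by rewrite lerD2l ler_wpM2l // subr_ge0; case/andP: t01.
Qed.

Lemma powR_mean (T : finType) (a : T -> R) : (forall t, 0 <= a t) -> (0 < #|T|)%nat ->
  powR (#|T|%:R^-1 * \sum_t a t) p <= #|T|%:R^-1 * \sum_t powR (a t) p.
Proof.
move=> a0 T0; have := @powR_mean_seq (map a (enum T)).
rewrite size_map -cardE !big_map -enumT !big_enum; apply.
  by apply/allP => x /mapP[t _ ->].
by rewrite -size_eq0 size_map -cardE -lt0n.
Qed.

End PowerMean.

(* Equality on X is the classical one; it is needed only to equip X with
   MathComp's module structure, so that big sums and scaling lemmas apply. *)
Section BanachLmodule.
Variable X : BanachSpace.
HB.instance Definition _ := gen_eqMixin (bs_car X).
HB.instance Definition _ := gen_choiceMixin (bs_car X).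
HB.instance Definition _ := GRing.isZmodule.Build (bs_car X)
  (@bs_addA X) (@bs_addC X) (@bs_add0 X) (@bs_addN X).
HB.instance Definition _ := GRing.Zmodule_isLmodule.Build R (bs_car X)
  (@bs_scalA X) (@bs_scal1 X) (@bs_scalDr X) (fun v a b => @bs_scalDl X a b v).
End BanachLmodule.

Lemma eq_rsum (T : finType) (F G : T -> R) : F =1 G -> rsum F = rsum G.
Proof. by move=> FG; apply: eq_bigr => t _; apply: FG. Qed.

Section Norm.
Variable X : BanachSpace.
Local Notation nrm := (@bs_norm X).

Lemma nrmZ a (x : X) : nrm (a *: x) = `|a| * nrm x.
Proof. by rewrite -RabsE; apply: bs_normZ. Qed.

Lemma nrm0 : nrm 0 = 0.
Proof. by rewrite -(scale0r (0 : X)) nrmZ normr0 mul0r. Qed.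

Lemma nrmN (x : X) : nrm (- x) = nrm x.
Proof. by rewrite -scaleN1r nrmZ normrN normr1 mul1r. Qed.

Lemma nrmB (x y : X) : nrm (x - y) = nrm (y - x).
Proof. by rewrite -nrmN opprB. Qed.

Lemma nrmD (x y : X) : nrm (x + y) <= nrm x + nrm y.
Proof. exact/RleP/bs_normD. Qed.

Lemma nrm_ge0 (x : X) : 0 <= nrm x.
Proof.
have := nrmD x (- x); rewrite subrr nrm0 nrmN -mulr2n.
by rewrite pmulrn_lge0.
Qed.

Lemma nrm_sum (T : finType) (F : T -> X) : nrm (\sum_t F t) <= \sum_t nrm (F t).
Proof.
apply: (big_ind2 (fun v r => nrm v <= r)) => //; first by rewrite nrm0.
by move=> x1 x2 y1 y2 h1 h2; apply: le_trans (nrmD _ _) (lerD h1 h2).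
Qed.

Lemma rpow_nrmE (p : R) (x : X) : 0 < p -> rpow (nrm x) p = powR (nrm x) p.
Proof. exact/rpowE/nrm_ge0. Qed.

Lemma rsum_rpow_nrmE (p : R) (T : finType) (F : T -> X) : 0 < p ->
  rsum (fun t => rpow (nrm (F t)) p) = \sum_t powR (nrm (F t)) p.
Proof. by move=> p_gt0; apply: eq_bigr => t _; rewrite rpow_nrmE. Qed.

End Norm.

Section SignVectors.
Variable n : nat.
Implicit Types (e : signs n) (j : 'I_n).

Definition sign_set e j (b : bool) : signs n := [ffun i => if i == j then b else e i].
Definition sign_flip e j : signs n := [ffun i => if i == j then ~~ e i else e i].

Lemma card_signs : #|{: signs n}| = expn 2 n.
Proof. by rewrite card_ffun card_bool card_ord. Qed.

Lemma sign_flipK j : involutive (sign_flip ^~ j).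
Proof. by move=> e; apply/ffunP => i; rewrite !ffunE; case: eqP => //= _; rewrite negbK. Qed.

Lemma sign_flip_at e j : sign_flip e j j = ~~ e j.
Proof. by rewrite ffunE eqxx. Qed.

Lemma sign_set_pair e j :
  (sign_set e j true, sign_set e j false) =
  if e j then (e, sign_flip e j) else (sign_flip e j, e).
Proof.
have set_e : sign_set e j (e j) = e.
  by apply/ffunP => i; rewrite !ffunE; case: eqP => // ->.
have set_flip : sign_set e j (~~ e j) = sign_flip e j.
  by apply/ffunP => i; rewrite !ffunE; case: eqP => // ->.
by case: (e j) set_e set_flip => /= -> ->.
Qed.

Lemma sum_sign_flip (V : nmodType) j (H : signs n -> V) :
  \sum_e (H e + H (sign_flip e j)) = (\sum_e H e) *+ 2.
Proof. by rewrite big_split /= mulr2n (reindex_inj (can_inj (sign_flipK j))). Qed.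

Lemma sum_sign_set (V : nmodType) j (G : signs n -> V) :
  \sum_e (G (sign_set e j true) + G (sign_set e j false)) = (\sum_e G e) *+ 2.
Proof.
rewrite -(sum_sign_flip j); apply: eq_bigr => e _.
by have := sign_set_pair e j; case: (e j) => -[-> ->] //; rewrite addrC.
Qed.

Lemma sum_sign_set_sub (V : lmodType R) j (G : signs n -> V) :
  \sum_e (G (sign_set e j true) - G (sign_set e j false)) =
  (\sum_(e : signs n) sgnR (e j) *: G e) *+ 2.
Proof.
rewrite -(sum_sign_flip j); apply: eq_bigr => e _; rewrite sign_flip_at.
have := sign_set_pair e j; case: (e j) => -[-> ->] /=; rewrite scale1r scaleN1r //.
by rewrite addrC.
Qed.

Lemma sum_sgn_scale (V : lmodType R) j (v : V) : \sum_(e : signs n) sgnR (e j) *: v = 0.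
Proof.
have := sum_sign_set_sub j (fun _ => v).
rewrite big1 => [/esym two_sum0|e _]; last by rewrite subrr.
by rewrite -[LHS]scale1r -(@mulVf _ 2) // -scalerA scaler_nat two_sum0 scaler0.
Qed.

End SignVectors.

Section LatticePoints.
Variables m n : nat.
Implicit Types (x : pt m n) (e : signs n) (j : 'I_n).

Lemma epsv_but_split j e :
  epsv_but m j e = epsv m 1 (sign_set e j true) + epsv m 1 (sign_set e j false).
Proof.
apply/rowP => i; rewrite !mxE !ffunE; case: eqP => _ /=; first by rewrite subrr.
by case: (e i); rewrite /= -?opprD -mulr2n.
Qed.

Lemma add_two_e_epsv_but x j e :
  ptadd x (two_e m j) + epsv_but m j e = x + epsv m 2 (sign_set e j true).
Proof. by apply/rowP => i; rewrite !mxE !ffunE; case: eqP; rewrite addr0. Qed.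

Lemma sub_two_e_epsv_but x j e :
  ptsub x (two_e m j) + epsv_but m j e = x + epsv m 2 (sign_set e j false).
Proof. by apply/rowP => i; rewrite !mxE !ffunE; case: eqP; rewrite ?oppr0 addr0. Qed.

Lemma epsv2_double e : epsv m 2 e = epsv m 1 e + epsv m 1 e.
Proof. by apply/rowP => i; rewrite !mxE; case: (e i); rewrite /= -?opprD -mulr2n. Qed.

End LatticePoints.

Section Inequalities.
Variables (X : BanachSpace) (p : R) (m n : nat) (f : pt m n -> X).
Hypothesis p_ge1 : 1 <= p.
Local Notation nrm := (@bs_norm X).

Let p_gt0 : 0 < p. Proof. exact: lt_le_trans p_ge1. Qed.

Definition shift_energy (a : pt m n) := \sum_x powR (nrm (f (x + a) - f x)) p.

Lemma shift_energy_add_le a b :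
  \sum_x powR (nrm (f (x + (a + b)) - f x)) p <=
  powR 2 p / 2 * (shift_energy a + shift_energy b).
Proof.
rewrite /shift_energy [in X in _ * (_ + X)](reindex_inj (addIr a)) -big_split.
rewrite mulr_sumr; apply: ler_sum => x _ /=.
apply: le_trans (powR_add_le p_ge1 (nrm_ge0 _) (nrm_ge0 _)).
apply: powR_le; rewrite ?addr_ge0 ?nrm_ge0 ?(ltW p_gt0) //.
have -> : f (x + (a + b)) - f x = (f (x + a) - f x) + (f (x + a + b) - f (x + a)).
  by rewrite [RHS]addrC [RHS]addrA subrK addrA.
exact: nrmD.
Qed.

Definition ncube : R := #|{: signs n}|%:R.

Lemma ncube_gt0 : 0 < ncube.
Proof. by rewrite /ncube card_signs ltr0n expn_gt0. Qed.

Lemma TjE j x : Tj j f x = ncube^-1 *: \sum_e f (x + epsv_but m j e).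
Proof. by rewrite /Tj RpowE IZR2 /ncube card_signs natrX. Qed.

Lemma RadE (N : nat) (h : signs N -> X) e :
  Rad h e = \sum_j sgnR (e j) *: ((#|{: signs N}|%:R)^-1 *: \sum_(d : signs N) sgnR (d j) *: h d).
Proof. by rewrite /Rad RpowE IZR2 card_signs natrX. Qed.

Lemma Tj_deviation_pointwise j x :
  powR (nrm (f x - Tj j f x)) p <=
  ncube^-1 * \sum_e powR (nrm (f (x + epsv_but m j e) - f x)) p.
Proof.
have ncube_inv_ge0 : 0 <= ncube^-1 by rewrite invr_ge0 ltW ?ncube_gt0.
have -> : f x - Tj j f x = ncube^-1 *: \sum_e (f x - f (x + epsv_but m j e)).
  rewrite TjE sumrB scalerBr sumr_const -scaler_nat scalerA mulVf ?scale1r //.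
  by rewrite gt_eqF ?ncube_gt0.
rewrite nrmZ ger0_norm //.
have mean_ge0 : 0 <= ncube^-1 * nrm (\sum_e (f x - f (x + epsv_but m j e))).
  by rewrite mulr_ge0 ?nrm_ge0.
apply: le_trans (powR_le (ltW p_gt0) mean_ge0 (ler_wpM2l ncube_inv_ge0 (nrm_sum _))) _.
have signs_gt0 : (0 < #|{: signs n}|)%nat by rewrite card_signs expn_gt0.
apply: le_trans (powR_mean p_ge1 (fun e => nrm_ge0 _) signs_gt0) _.
by under eq_bigr do rewrite nrmB.
Qed.

Lemma Tj_deviation_le j :
  \sum_x powR (nrm (f x - Tj j f x)) p <=
  powR 2 p / ncube * \sum_e shift_energy (epsv m 1 e).
Proof.
have ncube_inv_ge0 : 0 <= ncube^-1 by rewrite invr_ge0 ltW ?ncube_gt0.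
have split_step e : \sum_x powR (nrm (f (x + epsv_but m j e) - f x)) p <=
    powR 2 p / 2 * (shift_energy (epsv m 1 (sign_set e j true)) +
                    shift_energy (epsv m 1 (sign_set e j false))).
  by rewrite epsv_but_split; apply: shift_energy_add_le.
apply: le_trans (ler_sum _ (fun x _ => Tj_deviation_pointwise j x)) _.
rewrite -mulr_sumr exchange_big /=.
apply: le_trans (ler_wpM2l ncube_inv_ge0 (ler_sum _ (fun e _ => split_step e))) _.
rewrite -mulr_sumr (sum_sign_set j (fun e => shift_energy (epsv m 1 e))) -mulr_natr.
rewrite le_eqVlt; apply/orP; left; apply/eqP; field.
by rewrite gt_eqF ?ncube_gt0.
Qed.

Lemma Tj_two_e_diff_le (K : R) x :
  0 <= K -> Kconv_const X p K ->
  \sum_(e : signs n) powR (nrm (\sum_j sgnR (e j) *: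
      (Tj j f (ptadd x (two_e m j)) - Tj j f (ptsub x (two_e m j))))) p
  <= powR (2 * K) p * \sum_e powR (nrm (f (ptadd x (epsv m 2 e)) - f x)) p.
Proof.
move=> K_ge0 HK.
pose h (d : signs n) := 2 *: (f (x + epsv m 2 d) - f x).
have Tj_diff_Rad j : Tj j f (ptadd x (two_e m j)) - Tj j f (ptsub x (two_e m j)) =
    ncube^-1 *: \sum_(d : signs n) sgnR (d j) *: h d.
  rewrite !TjE -scalerBr -sumrB; congr (_ *: _).
  under eq_bigr do rewrite add_two_e_epsv_but sub_two_e_epsv_but.
  rewrite (sum_sign_set_sub j (fun e => f (x + epsv m 2 e))) /h.
  under [in RHS]eq_bigr do rewrite scalerA mulrC -scalerA scalerBr.
  by rewrite -scaler_sumr sumrB sum_sgn_scale subr0 scaler_nat.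
have Rad_h e : Rad h e = \sum_j sgnR (e j) *:
    (Tj j f (ptadd x (two_e m j)) - Tj j f (ptsub x (two_e m j))).
  by rewrite RadE; apply: eq_bigr => j _; rewrite Tj_diff_Rad.
have := HK n h; move/RleP; rewrite !rsum_rpow_nrmE // (rpowE K_ge0 p_gt0).
under eq_bigr do rewrite Rad_h.
move=> /le_trans; apply; rewrite powRM // -mulrA mulrCA.
apply: ler_wpM2l; first exact: powR_ge0.
rewrite mulr_sumr; apply: ler_sum => e _.
by rewrite /h nrmZ ger0_norm // powRM ?nrm_ge0.
Qed.

Lemma shift_energy_two_le (K : R) : 0 <= K ->
  \sum_x powR (2 * K) p * \sum_e powR (nrm (f (ptadd x (epsv m 2 e)) - f x)) p
  <= \sum_x powR (4 * K) p * \sum_e powR (nrm (f (ptadd x (epsv m 1 e)) - f x)) p.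
Proof.
move=> K_ge0; have -> : 4 * K = 2 * (2 * K) by ring.
rewrite -!mulr_sumr exchange_big [in leRHS]exchange_big /=.
rewrite (@powRM _ 2 (2 * K)) ?mulr_ge0 // -mulrA mulrCA; apply: ler_wpM2l; first exact: powR_ge0.
rewrite mulr_sumr.
apply: ler_sum => e _; rewrite /ptadd epsv2_double.
apply: le_trans (shift_energy_add_le _ _) _.
by rewrite -mulr2n mulrnAr -mulrnAl -[_ / 2 *+ 2]mulr_natr divfK.
Qed.

End Inequalities.

Theorem mainTheorem15 (X : BanachSpace) (p : R) (m n : nat)
  (hp : Rle 1 p) (hm : (0 < m)%nat) (f : pt m n -> X) :
  (* first inequality *)
  (forall j : 'I_n,
    Rle (rsum (fun x : pt m n => rpow (bs_norm (bs_sub (f x) (Tj j f x))) p))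
        (Rmult (Rdiv (rpow 2 p) (pow 2 n))
           (rsum (fun e : signs n => rsum (fun x : pt m n =>
              rpow (bs_norm (bs_sub (f (ptadd x (epsv m 1 e))) (f x))) p)))))
  /\
  (* second chain, for every admissible K-convexity constant K (in particular K = K_p(X)) *)
  (forall K : R, Rle 1 K -> Kconv_const X p K ->
    (forall x : pt m n,
      Rle (rsum (fun e : signs n => rpow (bs_norm (xsum (fun j : 'I_n =>
              bs_scal (sgnR (e j))
                (bs_sub (Tj j f (ptadd x (two_e m j))) (Tj j f (ptsub x (two_e m j))))))) p))
          (Rmult (rpow (Rmult 2 K) p)
             (rsum (fun e : signs n => rpow (bs_norm (bs_sub (f (ptadd x (epsv m 2 e))) (f x))) p))))
    /\
    Rle (rsum (fun x : pt m n => Rmult (rpow (Rmult 2 K) p)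
             (rsum (fun e : signs n => rpow (bs_norm (bs_sub (f (ptadd x (epsv m 2 e))) (f x))) p))))
        (rsum (fun x : pt m n => Rmult (rpow (Rmult 4 K) p)
             (rsum (fun e : signs n => rpow (bs_norm (bs_sub (f (ptadd x (epsv m 1 e))) (f x))) p))))).
Proof.
have p_ge1 : 1 <= p by apply/RleP.
have p_gt0 : 0 < p by exact: lt_le_trans p_ge1.
split=> [j|K /RleP K_ge1 HK].
  apply/RleP; rewrite rsum_rpow_nrmE //.
  under [in leRHS]eq_rsum do rewrite rsum_rpow_nrmE //.
  rewrite IZR2 rpowE // RpowE -natrX -card_signs.
  exact: Tj_deviation_le.
have K_ge0 : 0 <= K by exact: le_trans K_ge1.
split=> [x|]; apply/RleP.
  rewrite !rsum_rpow_nrmE // IZR2 rpowE ?mulr_ge0 //.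
  exact: Tj_two_e_diff_le.
under eq_rsum do rewrite rsum_rpow_nrmE //.
under [in leRHS]eq_rsum do rewrite rsum_rpow_nrmE //.
rewrite IZR2 IZR4 !rpowE ?mulr_ge0 //.
exact: shift_energy_two_le.
Qed.
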